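(* Let $W=(w_{ij})\in\mathbb{R}^{n\times n}$ be a symmetric positive definite matrix, and define $\widetilde w_{ij}=w_{ij}+w_{ii}+w_{jj}$ for $i\ne j$. For $S\subseteq[n]$ let $$w(S)=\sum_{\{i,j\}\subseteq S,\ i\neq j} w_{ij}+\sum_{i\in S}w_{ii},\qquad \widetilde w(S)=\sum_{\{i,j\}\subseteq S,\ i\ne j}\widetilde w_{ij},$$ where the sums over $\{i,j\}$ range over unordered pairs of distinct elements. Then for every nonempty $S\subseteq[n]$, $$\frac{\widetilde w(S)}{w(S)}\le (|S|-1)\frac{\lambda_{\max}(W)}{\lambda_{\min}(W)},$$ where $\lambda_{\min}(W),\lambda_{\max}(W)$ are the minimum and maximum eigenvalues of $W$. *)

From HB Require Import structures.
From mathcomp Require Import all_boot all_order all_algebra.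
Set Implicit Arguments. Unset Strict Implicit. Unset Printing Implicit Defensive.
Import Order.TTheory GRing.Theory Num.Theory.
Local Open Scope ring_scope.

Definition sym_posdef (R : rcfType) (n : nat) (W : 'M[R]_n) : Prop :=
  W^T = W /\ forall x : 'rV[R]_n, x != 0 -> 0 < (x *m W *m x^T) 0 0.

Definition wS (R : rcfType) (n : nat) (W : 'M[R]_n) (S : {set 'I_n}) : R :=
  \sum_(i in S) \sum_(j in S | (i < j)%N) W i j + \sum_(i in S) W i i.

Definition wtS (R : rcfType) (n : nat) (W : 'M[R]_n) (S : {set 'I_n}) : R :=
  \sum_(i in S) \sum_(j in S | (i < j)%N) (W i j + W i i + W j j).

Definition is_min_eigenvalue (R : rcfType) (n : nat) (W : 'M[R]_n) (a : R) :=
  eigenvalue W a /\ forall b, eigenvalue W b -> a <= b.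
Definition is_max_eigenvalue (R : rcfType) (n : nat) (W : 'M[R]_n) (a : R) :=
  eigenvalue W a /\ forall b, eigenvalue W b -> b <= a.

From HB Require Import structures.
From mathcomp Require Import all_boot all_order all_algebra.
From mathcomp Require Import complex.
From mathcomp.algebra_tactics Require Import ring lra.
Import Order.TTheory GRing.Theory Num.Theory.
Local Open Scope ring_scope.

(* Let k = |S|, let Q be the sum of all entries of the principal submatrix W_S
   and D its trace. Then 2 w(S) = Q + D and 2 w~(S) = Q + (2k - 3) D. The
   Rayleigh bounds lmin |x|^2 <= x W x^T <= lmax |x|^2, applied to the indicator
   vector of S and to the unit vectors, give k lmin <= Q, D <= k lmax. Hence
   w(S) >= k lmin and, when k >= 2, w~(S) <= (k - 1) k lmax; when k = 1 there
   are no pairs and w~(S) = 0. *)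

Section PairSums.
Variables (n : nat) (S : {set 'I_n}).

Lemma sum_sym_pairs {V : nmodType} (G : 'I_n -> 'I_n -> V) :
  (forall i j, G i j = G j i) ->
  \sum_(i in S) \sum_(j in S) G i j =
  (\sum_(i in S) \sum_(j in S | (i < j)%N) G i j) *+ 2 + \sum_(i in S) G i i.
Proof.
move=> G_sym.
have split_row i : i \in S -> \sum_(j in S) G i j =
    \sum_(j in S | (i < j)%N) G i j + \sum_(j in S | (j < i)%N) G i j + G i i.
  move=> Si; rewrite (bigID (fun j : 'I_n => (i < j)%N)) /= -addrA; congr (_ + _).
  rewrite (bigD1 i) /= ?Si ?ltnn // addrC; congr (_ + _); apply: eq_bigl => j.
  rewrite -!andbA; congr (_ && _).
  by rewrite -(inj_eq val_inj) /=; case: ltngtP.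
rewrite (eq_bigr _ split_row) !big_split /= mulr2n -!addrA; congr (_ + (_ + _)).
rewrite (exchange_big_dep (mem S)) /=; last by move=> i j _ /andP[].
apply: eq_bigr => i Si; apply: eq_big => [j|j _]; last exact: G_sym.
by rewrite Si.
Qed.

Lemma sum_pairs_add {R : numDomainType} (a : 'I_n -> R) :
  \sum_(i in S) \sum_(j in S | (i < j)%N) (a i + a j) =
  (#|S|%:R - 1) * \sum_(i in S) a i.
Proof.
have := sum_sym_pairs (fun i j => a i + a j) (fun i j => addrC _ _).
under eq_bigr do rewrite big_split /= sumr_const.
rewrite !big_split /= sumr_const sumrMnl.
move: (\sum_(i in S) \sum_(j in S | _) _) (\sum_(i in S) a i) => P s.
rewrite -!mulr2n -mulrnDl => /eqP; rewrite -subr_eq0 -mulrnBl mulrn_eq0 /=.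
by rewrite subr_eq0 mulrBl mul1r mulr_natl => /eqP ->; rewrite addrK.
Qed.

End PairSums.

Lemma eigenvalue_conj_diag {F : fieldType} {n} (P : 'M[F]_n) (d : 'rV[F]_n) j :
  P \in unitmx -> eigenvalue (invmx P *m diag_mx d *m P) (d 0 j).
Proof.
move=> P_unit; apply/eigenvalueP; exists (row j P).
  rewrite -row_mul !mulmxA mulmxV // mul1mx mul_diag_mx.
  by apply/rowP => k; rewrite !mxE.
apply/eqP => /(congr1 (fun v => (v *m invmx P) 0 j)) /=.
by rewrite -row_mul mulmxV // mul0mx !mxE eqxx => /eqP; rewrite oner_eq0.
Qed.

Section ComplexForms.
Local Open Scope sesquilinear_scope.
Context {C : numClosedFieldType} {n : nat}.

Lemma hermitian_eigenvalue_real (A : 'M[C]_n) c :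
  A \is hermsymmx -> eigenvalue A c -> c \is Num.real.
Proof.
move=> /is_hermitianmxP; rewrite expr0 scale1r => A_herm /eigenvalueP [v vA v_neq0].
have form_real : ((v *m A *m v ^t*) 0 0)^* = (v *m A *m v ^t*) 0 0.
  have : (v *m A *m v ^t*) ^t* = v *m A *m v ^t*.
    by rewrite !trmx_mul !map_mxM trmxCK -A_herm mulmxA.
  by move=> /matrixP /(_ 0 0); rewrite !mxE.
have v_norm_gt0 : 0 < (v *m v ^t*) 0 0 by rewrite -dotmxE dnorm_gt0.
have form_eq : (v *m A *m v ^t*) 0 0 = c * (v *m v ^t*) 0 0.
  by rewrite vA -scalemxAl mxE.
have -> : c = (v *m A *m v ^t*) 0 0 / (v *m v ^t*) 0 0.
  by rewrite form_eq mulfK // gt_eqF.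
by rewrite rpredM ?rpredV ?(gtr0_real v_norm_gt0) //; apply/CrealP.
Qed.

Lemma normalmx_form_bounds (A : 'M[C]_n) (a b : C) :
  A \is normalmx -> (forall c, eigenvalue A c -> a <= c <= b) ->
  forall u : 'rV[C]_n,
  a * (u *m u ^t*) 0 0 <= (u *m A *m u ^t*) 0 0 <= b * (u *m u ^t*) 0 0.
Proof.
move=> /orthomx_spectralP; set P := spectralmx A; set d := spectral_diag A.
move=> A_eq spec u.
have P_unitary : P \is unitarymx := spectral_unitarymx A.
pose y := u *m P ^t*.
have y_adj : P *m u ^t* = y ^t* by rewrite /y trmx_mul map_mxM trmxCK.
have form_y : u *m A *m u ^t* = y *m diag_mx d *m y ^t*.
  by rewrite [in LHS]A_eq invmx_unitary // -y_adj !mulmxA.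
have norm_y : u *m u ^t* = y *m y ^t*.
  by rewrite -y_adj /y !mulmxA -(mulmxA u) -invmx_unitary ?mulVmx ?mulmx1 ?spectral_unit.
clearbody y.
have form_y_sum : (y *m diag_mx d *m y ^t*) 0 0 = \sum_j d 0 j * (y 0 j * (y 0 j)^*).
  by rewrite mul_mx_diag mxE; apply: eq_bigr => k _; rewrite !mxE mulrCA mulrA.
have norm_y_sum : (y *m y ^t*) 0 0 = \sum_j y 0 j * (y 0 j)^*.
  by rewrite mxE; apply: eq_bigr => k _; rewrite !mxE.
rewrite form_y norm_y form_y_sum norm_y_sum !mulr_sumr.
have d_bounds j : a <= d 0 j <= b.
  by apply: spec; rewrite A_eq eigenvalue_conj_diag ?spectral_unit.
by apply/andP; split; apply: ler_sum => j _; have /andP[? ?] := d_bounds j;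
  apply: ler_wpM2r; rewrite ?mul_conjC_ge0.
Qed.

End ComplexForms.

(* The spectral theorem is only available over a numClosedFieldType, so the
   real symmetric case goes through the complexification R[i]. *)
Lemma sym_form_bounds {R : rcfType} {n} (W : 'M[R]_n) (a b : R) :
  W^T = W -> (forall c, eigenvalue W c -> a <= c <= b) ->
  forall x : 'rV[R]_n,
  a * (x *m x^T) 0 0 <= (x *m W *m x^T) 0 0 <= b * (x *m x^T) 0 0.
Proof.
move=> W_sym spec x; pose f := real_complex R.
have conj_f m k (M : 'M[R]_(m, k)) : map_mx Num.conj (map_mx f M) = map_mx f M.
  by apply/matrixP => i j; rewrite !mxE; apply/CrealP/complex_realP; exists (M i j).
have W_herm : map_mx f W \is hermsymmx.
  by apply/is_hermitianmxP; rewrite expr0 scale1r map_trmx conj_f W_sym.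
have spec_f c : eigenvalue (map_mx f W) c -> f a <= c <= f b.
  move=> Wc; have /complex_realP [r c_eq] := hermitian_eigenvalue_real _ _ W_herm Wc.
  by move: Wc; rewrite c_eq eigenvalue_map !lecR; apply: spec.
have := normalmx_form_bounds _ _ _ (hermitian_normalmx W_herm) spec_f (map_mx f x).
by rewrite map_trmx conj_f -!map_mxM !mxE -!rmorphM !lecR.
Qed.

Definition indicator_row {R : pzSemiRingType} {n} (S : {set 'I_n}) : 'rV[R]_n :=
  \row_i (i \in S)%:R.

Lemma form_indicator_row {R : pzSemiRingType} {n} (W : 'M[R]_n) (S : {set 'I_n}) :
  (indicator_row S *m W *m (indicator_row S)^T) 0 0 =
  \sum_(i in S) \sum_(j in S) W i j.
Proof.
rewrite /indicator_row mxE; under eq_bigr do rewrite !mxE big_distrl /=.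
rewrite exchange_big [RHS]big_mkcond; apply: eq_bigr => i _ /=.
under eq_bigr do rewrite !mxE.
case: (i \in S); rewrite ?mulr1n ?mulr0n; last by rewrite big1 // => j _; rewrite !mul0r.
rewrite [RHS]big_mkcond; apply: eq_bigr => j _; rewrite mul1r.
by case: (j \in S); rewrite ?mulr1n ?mulr0n ?mulr1 ?mulr0.
Qed.

Lemma norm_indicator_row {R : pzSemiRingType} {n} (S : {set 'I_n}) :
  ((indicator_row S : 'rV[R]_n) *m (indicator_row S)^T) 0 0 = #|S|%:R.
Proof.
have := form_indicator_row (1%:M : 'M[R]_n) S; rewrite mulmx1 => ->; rewrite -sumr_const.
apply: eq_bigr => i Si; rewrite (bigD1 i) //= big1 ?mxE ?eqxx ?addr0 // => j /andP[_ ji].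
by rewrite mxE eq_sym (negPf ji).
Qed.

Lemma form_delta {R : pzSemiRingType} {n} (W : 'M[R]_n) i :
  ((delta_mx 0 i : 'rV[R]_n) *m W *m (delta_mx 0 i : 'rV[R]_n)^T) 0 0 = W i i.
Proof. by rewrite -rowE trmx_delta -colE !mxE. Qed.

Lemma norm_delta {R : pzSemiRingType} {n} (i : 'I_n) :
  ((delta_mx 0 i : 'rV[R]_n) *m (delta_mx 0 i : 'rV[R]_n)^T) 0 0 = 1.
Proof. by have := form_delta (1%:M : 'M[R]_n) i; rewrite mulmx1 => ->; rewrite mxE eqxx. Qed.

Lemma posdef_eigenvalue_gt0 {R : realFieldType} {n} (W : 'M[R]_n) c :
  (forall x : 'rV[R]_n, x != 0 -> 0 < (x *m W *m x^T) 0 0) ->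
  eigenvalue W c -> 0 < c.
Proof.
move=> W_pd /eigenvalueP [v vW v_neq0].
have := W_pd v v_neq0; rewrite vW -scalemxAl mxE => c_form.
have v_norm_ge0 : 0 <= (v *m v^T) 0 0.
  by rewrite mxE; apply: sumr_ge0 => j _; rewrite mxE -expr2 sqr_ge0.
have v_norm_gt0 : 0 < (v *m v^T) 0 0.
  by rewrite lt_def v_norm_ge0 andbT; apply: contraTneq c_form => ->; rewrite mulr0 ltxx.
by rewrite pmulr_lgt0 in c_form.
Qed.

Section PairWeightBounds.
Context {R : rcfType} {n : nat} {W : 'M[R]_n} {a b : R}.
Hypothesis W_sym : W^T = W.
Hypothesis W_form : forall x : 'rV[R]_n,
  a * (x *m x^T) 0 0 <= (x *m W *m x^T) 0 0 <= b * (x *m x^T) 0 0.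
Variable S : {set 'I_n}.

Local Notation k := (#|S|%:R : R).
Local Notation block := (\sum_(i in S) \sum_(j in S) W i j).
Local Notation diag := (\sum_(i in S) W i i).
Local Notation pairs := (\sum_(i in S) \sum_(j in S | (i < j)%N) W i j).

Lemma block_bounds : a * k <= block <= b * k.
Proof. by have := W_form (indicator_row S); rewrite form_indicator_row norm_indicator_row. Qed.

Lemma diag_bounds : a * k <= diag <= b * k.
Proof.
have W_ii i : a <= W i i <= b.
  by have := W_form (delta_mx 0 i); rewrite form_delta norm_delta !mulr1.
have sum_const c : \sum_(i in S) c = c * k by rewrite sumr_const mulr_natr.
rewrite -!sum_const; apply/andP; split; apply: ler_sum => i _;
  by case/andP: (W_ii i).
Qed.

Lemma block_pairs : block = pairs *+ 2 + diag.
Proof. by apply: sum_sym_pairs => i j; rewrite -[in RHS]W_sym mxE. Qed.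

Lemma wtS_pairs : wtS W S = pairs + (k - 1) * diag.
Proof.
rewrite /wtS -sum_pairs_add -big_split /=; apply: eq_bigr => i _.
by rewrite -big_split /=; apply: eq_bigr => j _; rewrite addrA.
Qed.

Lemma wS_ge : a * k <= wS W S.
Proof.
have /andP[block_ge _] := block_bounds; have /andP[diag_ge _] := diag_bounds.
by move: block_ge; rewrite block_pairs /wS mulr2n => block_ge; lra.
Qed.

Lemma wtS_le : wtS W S <= (k - 1) * k * b.
Proof.
have [S_le1 | S_gt1] := leqP #|S| 1.
  have -> : wtS W S = 0.
    rewrite /wtS big1 // => i Si; rewrite big1 // => j /andP[Sj].
    by rewrite (card_le1_eqP S_le1 i j Si Sj) ltnn.
  by move: S_le1; case: #|S| => [|[|]] // _; rewrite ?mulr0n ?mulr1n ?subrr !(mul0r, mulr0).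
have /andP[_ block_le] := block_bounds; have /andP[_ diag_le] := diag_bounds.
have k_ge2 : 2%:R <= k by rewrite ler_nat.
have diag_le' : (k *+ 2 - 3) * diag <= (k *+ 2 - 3) * (b * k).
  by rewrite ler_wpM2l //; lra.
by move: block_le diag_le'; rewrite block_pairs wtS_pairs !mulr2n => ? ?; lra.
Qed.

End PairWeightBounds.

Theorem lemma6 (R : rcfType) (n : nat) (W : 'M[R]_n) (lmin lmax : R)
  (S : {set 'I_n}) :
  sym_posdef W ->
  is_min_eigenvalue W lmin -> is_max_eigenvalue W lmax ->
  S != set0 ->
  wtS W S / wS W S <= (#|S| - 1)%:R * (lmax / lmin).
Proof.
move=> [W_sym W_pd] [lmin_eig lmin_le] [_ lmax_ge] S_neq0.
have W_spec c : eigenvalue W c -> lmin <= c <= lmax.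
  by move=> Wc; rewrite lmin_le ?lmax_ge.
have W_form := sym_form_bounds W lmin lmax W_sym W_spec.
have lmin_gt0 := posdef_eigenvalue_gt0 W lmin W_pd lmin_eig.
have lmax_gt0 : 0 < lmax := lt_le_trans lmin_gt0 (lmax_ge _ lmin_eig).
have k_gt0 : 0 < #|S|%:R :> R by rewrite ltr0n card_gt0.
have w_ge := wS_ge W_sym W_form S.
have w_gt0 : 0 < wS W S by apply: lt_le_trans w_ge; rewrite mulr_gt0.
rewrite ler_pdivrMr // natrB ?card_gt0 //.
apply: le_trans (wtS_le W_sym W_form S) _.
have -> : (#|S|%:R - 1) * #|S|%:R * lmax =
          (#|S|%:R - 1) * (lmax / lmin) * (lmin * #|S|%:R) :> R.
  by field; rewrite gt_eqF.
by rewrite ler_wpM2l // mulr_ge0 ?divr_ge0 ?subr_ge0 ?ler1n ?card_gt0 ?ltW.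
Qed.
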